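(* Let $m,n\ge0$ be integers, let $\mathbb{K}$ be a field of characteristic zero, and regard $m-n$ as an element of $\mathbb{K}$. Let $\lambda,\mu$ be bipartitions. (i) If $\lambda$ is almost $(m|n)$-cross, then $D_{\lambda,\mu}(m-n)=0$ whenever $\mu\ne\lambda$. (ii) If $\mu$ is almost $(m|n)$-cross, then $D_{\lambda,\mu}(m-n)=0$ unless $\lambda=\mu$ or $|\lambda|>|\mu|+2$.
   Context: A partition is a weakly decreasing sequence $\alpha=(\alpha_1,\alpha_2,\dots)$ of nonnegative integers, almost all zero, with size $|\alpha|=\sum_i\alpha_i$. A bipartition is a pair $\lambda=(\lambda^\bullet,\lambda^\circ)$ of partitions, with size $|\lambda|=|\lambda^\bullet|+|\lambda^\circ|$. A bipartition $\lambda$ is $(m|n)$-cross if there exists $0\le k\le m$ with $\lambda^\bullet_{k+1}+\lambda^\circ_{m-k+1}\le n$. It is almost $(m|n)$-cross if it is not $(m|n)$-cross but every bipartition strictly contained in it (componentwise containment) is $(m|n)$-cross. Set $I_\wedge(\lambda)=\{\lambda^\bullet_i-(i-1):i\ge1\}$ and $I_\vee(\lambda,\delta)=\{i-\delta-\lambda^\circ_i:i\ge1\}$. The weight diagram $x_\lambda(\delta)$ labels each integer $j$ by: - $\bigcirc$ if $j$ is in neither set; - $\wedge$ if $j$ is only in $I_\wedge(\lambda)$; - $\vee$ if $j$ is only in $I_\vee(\lambda,\delta)$; - $\times$ if $j$ is in both. The cap diagram $c_\lambda(\delta)$ is built iteratively: at each step, draw a cap connecting $i<j$ whenever $i$ is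 labelled $\vee$, $j$ is labelled $\wedge$, and every integer strictly between them is labelled $\bigcirc$ or $\times$ or lies on an earlier cap. Vertices joined by a cap are connected. $x_\mu(\delta)$ is linked to $x_\lambda(\delta)$ if it is obtained by interchanging labels on finitely many pairs of connected vertices of $x_\lambda(\delta)$. $D_{\lambda,\mu}(\delta)=1$ if $x_\mu(\delta)$ is linked to $x_\lambda(\delta)$, and $0$ otherwise. *)

From Stdlib Require Import ClassicalDescription.
From mathcomp Require Import all_boot all_order all_algebra.
Set Implicit Arguments. Unset Strict Implicit. Unset Printing Implicit Defensive.
Import GRing.Theory Num.Theory.

(* A partition is stored as its (canonical) list of nonzero parts, weakly
   decreasing; all further parts are zero. *)
Definition is_partition (s : seq nat) : bool :=
  sorted geq s && all (fun x => 0 < x) s.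

Record partition := Partition { pseq : seq nat; pseqP : is_partition pseq }.

(* the i-th part alpha_i (1-indexed, i >= 1); equals 0 beyond the length *)
Definition part (a : partition) (i : nat) : nat := nth 0 (pseq a) i.-1.

Definition psize (a : partition) : nat := sumn (pseq a).

Record bipartition := Bipartition { bul : partition; cir : partition }.

Definition bsize (l : bipartition) : nat := psize (bul l) + psize (cir l).

Definition bicontained (nu l : bipartition) : Prop :=
  forall i, 1 <= i ->
    part (bul nu) i <= part (bul l) i /\ part (cir nu) i <= part (cir l) i.

Definition strictly_contained (nu l : bipartition) : Prop :=
  bicontained nu l /\ nu <> l.

Definition cross (m n : nat) (l : bipartition) : Prop :=
  exists k, k <= m /\ part (bul l) k.+1 + part (cir l) (m - k).+1 <= n.

Definition almost_cross (m n : nat) (l : bipartition) : Prop :=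
  ~ cross m n l /\ forall nu, strictly_contained nu l -> cross m n nu.

Definition in_wedge (l : bipartition) (j : int) : Prop :=
  exists i, 1 <= i /\ j = ((part (bul l) i)%:Z - (i - 1)%:Z)%R.

Definition in_vee (K : fieldType) (d : K) (l : bipartition) (j : int) : Prop :=
  exists i, 1 <= i /\ (j%:~R = i%:R - d - (part (cir l) i)%:R :> K)%R.

Inductive label := Circ | Wedge | Vee | Cross.

Definition decP (P : Prop) : bool :=
  if excluded_middle_informative P then true else false.

Definition weight (K : fieldType) (d : K) (l : bipartition) (j : int) : label :=
  match decP (in_wedge l j), decP (in_vee d l j) with
  | false, false => Circ
  | true, false => Wedge
  | false, true => Vee
  | true, true => Cross
  end.

Definition on_cap (C : int -> int -> Prop) (v : int) : Prop :=
  exists a b, C a b /\ (v = a \/ v = b).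

(* caps drawn at a step, given the set C of caps drawn at earlier steps *)
Definition new_cap (x : int -> label) (C : int -> int -> Prop) (i j : int) : Prop :=
  (i < j)%R /\ x i = Vee /\ x j = Wedge /\ ~ on_cap C i /\ ~ on_cap C j /\
  forall v, (i < v)%R -> (v < j)%R -> x v = Circ \/ x v = Cross \/ on_cap C v.

Fixpoint caps_upto (x : int -> label) (k : nat) : int -> int -> Prop :=
  match k with
  | 0 => fun _ _ => False
  | k'.+1 => fun i j => caps_upto x k' i j \/ new_cap x (caps_upto x k') i j
  end.

Definition cap (x : int -> label) (i j : int) : Prop := exists k, caps_upto x k i j.

Definition swap_pairs (s : seq (int * int)) (v : int) : int :=
  foldr (fun p w => if w == p.1 then p.2 else if w == p.2 then p.1 else w) v s.

(* y is obtained from x by interchanging labels on finitely many pairs of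
   connected vertices of x *)
Definition linked (x y : int -> label) : Prop :=
  exists s : seq (int * int),
    (forall p, p \in s -> cap x p.1 p.2) /\ forall j, y j = x (swap_pairs s j).

Definition D (K : fieldType) (d : K) (l mu : bipartition) : nat :=
  if excluded_middle_informative (linked (weight d l) (weight d mu)) then 1 else 0.

(* Everything is read off the weight diagram at [delta = m - n], which in
   characteristic zero may be computed over the integers.  The key fact is that a
   non-(m|n)-cross bipartition whose diagram has a pure vee left of a pure wedge,
   or a pure wedge immediately followed by a pure vee, has a box whose removal
   keeps it non-cross: choosing the wedge closest to the vee, every wedge in
   between is a cross, and counting rows locates a removable box.  Hence an almost
   cross [lambda] has no caps, and is linked only to itself.  If [x_lambda] is
   linked to an almost cross [x_mu] by a non-trivial product of transpositions
   along caps, then [mu] is contained in [lambda], and a swapped cap [p < q]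
   exhibits three boxes of [lambda / mu], unless [q = p + 1], in which case [x_mu]
   has a pure wedge next to a pure vee. *)

From Pilot Require Import Defs.
From Stdlib Require Import Classical ClassicalDescription.
From mathcomp Require Import all_boot all_order all_algebra.
From mathcomp Require Import zify.
Set Implicit Arguments. Unset Strict Implicit. Unset Printing Implicit Defensive.
Import Order.TTheory GRing.Theory Num.Theory.

Lemma decPT (P : Prop) : Defs.decP P = true <-> P.
Proof. by rewrite /Defs.decP; case: excluded_middle_informative. Qed.

Lemma decPF (P : Prop) : Defs.decP P = false <-> ~ P.
Proof. by rewrite /Defs.decP; case: excluded_middle_informative. Qed.

Lemma pchar0_intr_inj (K : fieldType) : [pchar K]%R =i pred0 -> injective (intr : int -> K).
Proof.
move=> /(pcharf0P K) natf0 z w /eqP; rewrite -subr_eq0 -intrB.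
case: (z - w)%R (@subr0_eq _ z w) => k /= zw; last first.
  by rewrite NegzE mulrNz oppr_eq0 natf0.
by rewrite natf0 => /eqP k0; apply: zw; rewrite k0.
Qed.

Section Partitions.
Implicit Types a b : Defs.partition.

Lemma leq_part a i j : (1 <= i)%N -> (i <= j)%N -> (part a j <= part a i)%N.
Proof.
move=> i_gt0 le_ij; have /andP[sorted_a _] := pseqP a; rewrite /part.
case: (ltnP j.-1 (size (pseq a))) => [lt_j|ge_j]; last by rewrite nth_default.
have geq_trans : transitive geq by move=> x y z /=; lia.
by apply: (sorted_leq_nth geq_trans leqnn) => //; rewrite ?inE /=; lia.
Qed.

Lemma part_eq0 a j : (size (pseq a) < j)%N -> part a j = 0%N.
Proof. by move=> lt_j; rewrite /part nth_default //; lia. Qed.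

Lemma part_gt0 a j : (1 <= j)%N -> (j <= size (pseq a))%N -> (0 < part a j)%N.
Proof.
move=> j_gt0 le_j; have /andP[_ /allP pos_a] := pseqP a.
apply: pos_a; rewrite /part; by apply: mem_nth; rewrite prednK.
Qed.

Lemma partition_ext a b : (forall k, (1 <= k)%N -> part a k = part b k) -> a = b.
Proof.
move=> eq_ab; have eq_size : size (pseq a) = size (pseq b).
  apply/eqP; rewrite eqn_leq; apply/andP; split; rewrite leqNgt; apply/negP => lt_size.
  - have := part_gt0 (isT : 0 < (size (pseq b)).+1) lt_size.
    by rewrite eq_ab // part_eq0.
  - have := part_gt0 (isT : 0 < (size (pseq a)).+1) lt_size.
    by rewrite -eq_ab // part_eq0.
have eq_seq : pseq a = pseq b.
  by apply: (eq_from_nth (x0 := 0%N)) => // i _; apply: (eq_ab i.+1).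
case: a b eq_seq {eq_ab eq_size} => s As [t Bt] /= est; subst t.
by rewrite (bool_irrelevance As Bt).
Qed.

Definition subpartition b a : Prop := forall i, (1 <= i)%N -> (part b i <= part a i)%N.

Lemma subpartition_anti a b : subpartition a b -> subpartition b a -> a = b.
Proof.
by move=> sub_ab sub_ba; apply: partition_ext => k k_gt0; apply/eqP; rewrite eqn_leq sub_ab ?sub_ba.
Qed.

Lemma sumn_nth_iota (s : seq nat) N :
  (size s <= N)%N -> sumn s = \sum_(i <- iota 0 N) nth 0%N s i.
Proof.
elim: s N => [|x s IH] [|N] //= le_sN; first by rewrite big_nil.
  by rewrite big1_seq // => i _; rewrite nth_nil.
by rewrite big_cons (iotaDl 1 0 N) big_map (IH N).
Qed.

Lemma psize_iota a N : (size (pseq a) <= N)%N -> psize a = \sum_(i <- iota 1 N) part a i.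
Proof. by move=> le_aN; rewrite /psize (sumn_nth_iota le_aN) (iotaDl 1 0 N) big_map. Qed.

Lemma psize_subpartition a b (r : seq nat) : subpartition b a -> uniq r -> all (leq 1) r ->
  (psize b + \sum_(i <- r) (part a i - part b i) <= psize a)%N.
Proof.
move=> sub_ba uniq_r /allP r_gt0.
set N := (size (pseq a) + size (pseq b) + \max_(i <- r) i)%N.
have ->: psize a = (psize b + \sum_(i <- iota 1 N) (part a i - part b i))%N.
  rewrite (psize_iota (a := a) (N := N)) ?(psize_iota (a := b) (N := N)); try lia.
  rewrite -big_split /=; apply: eq_big_seq => i; rewrite mem_iota => /andP[i_gt0 _].
  by rewrite subnKC ?sub_ba.
rewrite leq_add2l.
apply: (@uniq_sub_le_big _ addn leq leqnn (fun x y => leq_addr y x)) => // [|i r_i].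
  exact: iota_uniq.
have := @leq_bigmax_seq nat r xpredT (fun j => j) i r_i isT; have := r_gt0 i r_i.
rewrite mem_iota /N => -> le_i /=; rewrite add1n ltnS; exact: leq_trans le_i (leq_addl _ _).
Qed.

End Partitions.

Definition strictly_decreasing (s : nat -> int) : Prop :=
  forall i j, (1 <= i)%N -> (i < j)%N -> (s j < s i)%R.

Lemma strictly_decreasing_le s i j : strictly_decreasing s ->
  (1 <= i)%N -> (i <= j)%N -> (s j <= s i)%R.
Proof.
move=> s_decr i_gt0; rewrite leq_eqVlt => /orP[/eqP-> //|lt_ij].
exact/ltW/s_decr.
Qed.

Lemma strictly_decreasing_inj s i j : strictly_decreasing s ->
  (1 <= i)%N -> (1 <= j)%N -> s i = s j -> i = j.
Proof.
move=> s_decr i_gt0 j_gt0 eq_s; case: (ltngtP i j) => // [lt_ij|lt_ji].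
- by have := s_decr _ _ i_gt0 lt_ij; rewrite eq_s ltxx.
- by have := s_decr _ _ j_gt0 lt_ji; rewrite eq_s ltxx.
Qed.

(* If an injection pushes every term of [s] to the right onto a term of [t], then
   the [k] values [f (s 1), ..., f (s k)] are terms [t j] with [j < k] as soon as
   [t k < s k]; counting them gives [s k <= t k]. *)
Lemma strictly_decreasing_dominated (s t : nat -> int) (f : int -> int) k :
  strictly_decreasing s -> strictly_decreasing t -> injective f ->
  (forall i, (1 <= i)%N -> exists2 j, (1 <= j)%N & f (s i) = t j) ->
  (forall i, (1 <= i)%N -> (s i <= f (s i))%R) ->
  (1 <= k)%N -> (s k <= t k)%R.
Proof.
move=> s_decr t_decr f_inj s_to_t s_right k_gt0; rewrite leNgt; apply/negP => lt_tk.
have uniq_fs : uniq [seq f (s i) | i <- iota 1 k].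
  rewrite map_inj_in_uniq ?iota_uniq // => i j; rewrite !mem_iota => i_k j_k /f_inj.
  by apply: (strictly_decreasing_inj s_decr); lia.
suff /(uniq_leq_size uniq_fs) :
    {subset [seq f (s i) | i <- iota 1 k] <= [seq t j | j <- iota 1 (k - 1)]}.
  by rewrite !size_map !size_iota; lia.
move=> x /mapP[i]; rewrite mem_iota => /andP[i_gt0 i_k] ->.
have [j j_gt0 fsi] := s_to_t i i_gt0; rewrite fsi; apply: map_f.
rewrite mem_iota j_gt0 /= ltnNge; apply/negP => le_kj.
have := strictly_decreasing_le (j := j) t_decr k_gt0.
have := strictly_decreasing_le (j := k) s_decr i_gt0.
have := s_right i i_gt0; rewrite fsi; lia.
Qed.

(* The elements of [I_wedge] and [I_vee] contributed by row [i]. *)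
Definition wedge_pos (a : Defs.partition) (i : nat) : int := ((part a i)%:Z - (i - 1)%:Z)%R.

Definition vee_pos (e : int) (a : Defs.partition) (i : nat) : int :=
  (i%:Z - e - (part a i)%:Z)%R.

Definition in_vee_int (e : int) (l : bipartition) (j : int) : Prop :=
  exists i, (1 <= i)%N /\ j = vee_pos e (cir l) i.

Lemma wedge_pos_decreasing a : strictly_decreasing (wedge_pos a).
Proof. move=> i j i_gt0 lt_ij; have := leq_part a i_gt0 (ltnW lt_ij); rewrite /wedge_pos; lia. Qed.

Lemma opp_vee_pos_decreasing e a : strictly_decreasing (fun i => - vee_pos e a i)%R.
Proof. move=> i j i_gt0 lt_ij; have := leq_part a i_gt0 (ltnW lt_ij); rewrite /vee_pos; lia. Qed.

Lemma vee_pos_le e a i j : (1 <= i)%N -> (i <= j)%N -> (vee_pos e a i <= vee_pos e a j)%R.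
Proof. move=> i_gt0 le_ij; have := leq_part a i_gt0 le_ij; rewrite /vee_pos; lia. Qed.

Lemma in_veeE (K : fieldType) (charK0 : [pchar K]%R =i pred0) e l j :
  in_vee (e%:~R : K) l j <-> in_vee_int e l j.
Proof.
split=> -[i [i_gt0 Ej]]; exists i; split => //; last by rewrite Ej /vee_pos !intrB.
by apply: (pchar0_intr_inj charK0); rewrite Ej /vee_pos !intrB.
Qed.

Lemma wedge_subpartition (l mu : bipartition) (f : int -> int) : injective f ->
  (forall v, in_wedge mu v -> in_wedge l (f v) /\ (v <= f v)%R) ->
  subpartition (bul mu) (bul l).
Proof.
move=> f_inj f_wedge k k_gt0.
suff: (wedge_pos (bul mu) k <= wedge_pos (bul l) k)%R by rewrite /wedge_pos; lia.
apply: (strictly_decreasing_dominated (wedge_pos_decreasing _) (wedge_pos_decreasing _)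
  f_inj) => // i i_gt0.
- by have [[j [j_gt0 ->]] _] := f_wedge _ (ex_intro _ i (conj i_gt0 erefl)); exists j.
- by have [_] := f_wedge _ (ex_intro _ i (conj i_gt0 erefl)).
Qed.

Lemma vee_subpartition e (l mu : bipartition) (f : int -> int) : injective f ->
  (forall v, in_vee_int e mu v -> in_vee_int e l (f v) /\ (f v <= v)%R) ->
  subpartition (cir mu) (cir l).
Proof.
move=> f_inj f_vee k k_gt0.
have g_inj : injective (fun v => - f (- v))%R by move=> v w /oppr_inj /f_inj /oppr_inj.
suff: (- vee_pos e (cir mu) k <= - vee_pos e (cir l) k)%R by rewrite /vee_pos; lia.
apply: (strictly_decreasing_dominated (opp_vee_pos_decreasing e _)
  (opp_vee_pos_decreasing e _) g_inj) => // i i_gt0;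
  rewrite opprK; have [[j [j_gt0 Ej]] le_f] := f_vee _ (ex_intro _ i (conj i_gt0 erefl)).
- by exists j; rewrite // Ej.
- by rewrite lerNr opprK.
Qed.

Section Caps.
Variable x : int -> label.

Lemma caps_upto_vee_wedge k i j : caps_upto x k i j -> [/\ (i < j)%R, x i = Vee & x j = Wedge].
Proof. by elim: k i j => [//|k IH] i j /= [/IH //|[lt_ij [-> [-> _]]]]. Qed.

Lemma cap_vee_wedge i j : cap x i j -> [/\ (i < j)%R, x i = Vee & x j = Wedge].
Proof. by move=> [k /caps_upto_vee_wedge]. Qed.

Lemma caps_upto_mono k k' i j : (k <= k')%N -> caps_upto x k i j -> caps_upto x k' i j.
Proof.
elim: k' => [|k' IH] le_k cap_k; first by move: le_k cap_k; rewrite leqn0 => /eqP->.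
by move: le_k; rewrite leq_eqVlt => /orP[/eqP<- //|/IH/(_ cap_k)]; left.
Qed.

Lemma cap_new i j : cap x i j -> exists k, new_cap x (caps_upto x k) i j.
Proof. by move=> [k]; elim: k => [//|k IH] /= [/IH|new_k] //; exists k. Qed.

Lemma new_cap_later_fresh k1 k2 a b c d : (k1 < k2)%N ->
  new_cap x (caps_upto x k1) a b -> new_cap x (caps_upto x k2) c d ->
  [/\ c != a, c != b, d != a & d != b].
Proof.
move=> lt_k new_ab [_ [_ [_ [fresh_c [fresh_d _]]]]].
have cap_ab : caps_upto x k2 a b by apply: (caps_upto_mono lt_k); right.
have on_a : on_cap (caps_upto x k2) a by exists a, b; split; [|left].
have on_b : on_cap (caps_upto x k2) b by exists a, b; split; [|right].
by split; apply/eqP => E; subst; [apply: fresh_c|apply: fresh_c|apply: fresh_d|apply: fresh_d].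
Qed.

Lemma new_cap_functional C a b c : new_cap x C a b -> new_cap x C a c -> b = c.
Proof.
move=> [lt_ab [_ [x_b [_ [fresh_b between_b]]]]] [lt_ac [_ [x_c [_ [fresh_c between_c]]]]].
case: (ltgtP b c) => // [lt_bc|lt_cb].
- by have := between_c b lt_ab lt_bc; rewrite x_b => -[|[|]].
- by have := between_b c lt_ac lt_cb; rewrite x_c => -[|[|]].
Qed.

Lemma new_cap_injective C a b c : new_cap x C a c -> new_cap x C b c -> a = b.
Proof.
move=> [lt_ac [x_a [_ [fresh_a [_ between_a]]]]] [lt_bc [x_b [_ [fresh_b [_ between_b]]]]].
case: (ltgtP a b) => // [lt_ab|lt_ba].
- by have := between_a b lt_ab lt_bc; rewrite x_b => -[|[|]].
- by have := between_b a lt_ba lt_ac; rewrite x_a => -[|[|]].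
Qed.

Lemma cap_functional a b c : cap x a b -> cap x a c -> b = c.
Proof.
move=> /cap_new[k1 new_ab] /cap_new[k2 new_ac].
case: (ltngtP k1 k2) => [lt_k|lt_k|eq_k]; last by subst; exact: new_cap_functional new_ab new_ac.
- by have [/eqP] := new_cap_later_fresh lt_k new_ab new_ac.
- by have [/eqP] := new_cap_later_fresh lt_k new_ac new_ab.
Qed.

Lemma cap_injective a b c : cap x a c -> cap x b c -> a = b.
Proof.
move=> /cap_new[k1 new_ac] /cap_new[k2 new_bc].
case: (ltngtP k1 k2) => [lt_k|lt_k|eq_k]; last by subst; exact: new_cap_injective new_ac new_bc.
- by have [_ _ _ /eqP] := new_cap_later_fresh lt_k new_ac new_bc.
- by have [_ _ _ /eqP] := new_cap_later_fresh lt_k new_bc new_ac.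
Qed.
End Caps.

Section Swaps.
Variable x : int -> label.

Definition swap_pair (p : int * int) (w : int) : int :=
  if w == p.1 then p.2 else if w == p.2 then p.1 else w.

Lemma swap_pairs_cons p s v : swap_pairs (p :: s) v = swap_pair p (swap_pairs s v).
Proof. by []. Qed.

Lemma swap_pairK p : involutive (swap_pair p).
Proof.
move=> w; rewrite /swap_pair; case: (eqVneq w p.1) => [->|ne1]; first by rewrite eqxx; case: eqP.
by case: (eqVneq w p.2) => [->|ne2]; rewrite ?eqxx ?(negbTE ne1) ?(negbTE ne2).
Qed.

Lemma swap_pairs_inj s : injective (swap_pairs s).
Proof.
elim: s => [//|p s IH] v w; rewrite !swap_pairs_cons => /(can_inj (swap_pairK p)).
exact: IH.
Qed.

(* Since caps are disjoint, a product of transpositions along caps moves each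
   vertex at most to its cap partner. *)
Lemma swap_pairs_cap s : (forall p, p \in s -> cap x p.1 p.2) ->
  forall v, [\/ swap_pairs s v = v, cap x v (swap_pairs s v) | cap x (swap_pairs s v) v].
Proof.
elim: s => [|p s IH] caps_s v; first by constructor 1.
have cap_p : cap x p.1 p.2 by apply: caps_s; rewrite inE eqxx.
have [_ x_p1 x_p2] := cap_vee_wedge cap_p.
have := IH (fun q s_q => caps_s q (mem_behead (s := p :: s) s_q)) v.
rewrite swap_pairs_cons /swap_pair; set w := swap_pairs s v.
case: (eqVneq w p.1) => [->|_]; first case=> [<-|cap_vp|cap_pv].
- by constructor 2.
- by have [_ _] := cap_vee_wedge cap_vp; rewrite x_p1.
- by constructor 1; apply: cap_functional cap_p cap_pv.
case: (eqVneq w p.2) => [->|_ //]; case=> [<-|cap_vp|cap_pv].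
- by constructor 3.
- by constructor 1; apply/esym/(cap_injective cap_vp cap_p).
- by have [_] := cap_vee_wedge cap_pv; rewrite x_p2.
Qed.

Lemma swap_pairs_transposition s v : (forall p, p \in s -> cap x p.1 p.2) ->
  swap_pairs s v != v ->
  exists p q, [/\ cap x p q, swap_pairs s p = q & swap_pairs s q = p].
Proof.
move=> caps_s moved_v; have sg_cap := swap_pairs_cap caps_s.
have sg_inj := @swap_pairs_inj s; set sg := swap_pairs s in sg_cap sg_inj moved_v *.
have moved_sg : sg (sg v) != sg v by apply: contra moved_v => /eqP/sg_inj->.
case: (sg_cap v) => [/eqP|cap_v|cap_v]; first by rewrite (negbTE moved_v).
- exists v, (sg v); split => //; case: (sg_cap (sg v)) => [/eqP|cap_sv|cap_sv].
  + by rewrite (negbTE moved_sg).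
  + by have [_ _ x_sv] := cap_vee_wedge cap_v; have [_] := cap_vee_wedge cap_sv; rewrite x_sv.
  + exact: cap_injective cap_sv cap_v.
- exists (sg v), v; split => //; case: (sg_cap (sg v)) => [/eqP|cap_sv|cap_sv].
  + by rewrite (negbTE moved_sg).
  + exact: cap_functional cap_sv cap_v.
  + by have [_ x_sv _] := cap_vee_wedge cap_v; have [_ _] := cap_vee_wedge cap_sv; rewrite x_sv.
Qed.
End Swaps.

Definition pure_wedge e l j : Prop := in_wedge l j /\ ~ in_vee_int e l j.
Definition pure_vee e l j : Prop := in_vee_int e l j /\ ~ in_wedge l j.

Section Weights.
Variables (K : fieldType) (charK0 : [pchar K]%R =i pred0) (e : int).
Let d : K := e%:~R.

Ltac weight_cases l j :=
  rewrite /weight /pure_wedge /pure_vee -?(in_veeE charK0);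
  have := decPT (in_wedge l j); have := decPF (in_wedge l j);
  have := decPT (in_vee d l j); have := decPF (in_vee d l j);
  case: (Defs.decP (in_wedge l j)); case: (Defs.decP (in_vee d l j));
  intuition discriminate.

Lemma in_wedge_weight l j : in_wedge l j <-> weight d l j = Wedge \/ weight d l j = Cross.
Proof. weight_cases l j. Qed.

Lemma in_vee_weight l j : in_vee_int e l j <-> weight d l j = Vee \/ weight d l j = Cross.
Proof. weight_cases l j. Qed.

Lemma weight_Wedge l j : weight d l j = Wedge <-> pure_wedge e l j.
Proof. weight_cases l j. Qed.

Lemma weight_Vee l j : weight d l j = Vee <-> pure_vee e l j.
Proof. weight_cases l j. Qed.

Lemma linked_subpartition l mu : linked (weight d l) (weight d mu) ->
  subpartition (bul mu) (bul l) /\ subpartition (cir mu) (cir l).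
Proof.
move=> [s [caps_s eq_y]]; have sg_cap := swap_pairs_cap caps_s.
split.
  apply: (wedge_subpartition (f := swap_pairs s) (@swap_pairs_inj s)) => v.
  rewrite !in_wedge_weight eq_y => x_sv; split=> //.
  case: (sg_cap v) => [-> //|/cap_vee_wedge[/ltW]//|/cap_vee_wedge[_ x_v _]].
  by move: x_sv; rewrite x_v => -[].
apply: (vee_subpartition (e := e) (f := swap_pairs s) (@swap_pairs_inj s)) => v.
rewrite !in_vee_weight eq_y => x_sv; split=> //.
case: (sg_cap v) => [-> //|/cap_vee_wedge[_ _ x_v]|/cap_vee_wedge[/ltW]//].
by move: x_sv; rewrite x_v => -[].
Qed.

Lemma weight_inj l mu : weight d l =1 weight d mu -> l = mu.
Proof.
have linked_eq l' mu' : weight d l' =1 weight d mu' -> linked (weight d l') (weight d mu').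
  by move=> eq_w; exists [::]; split=> // j; rewrite eq_w.
move=> eq_w; have [bul_le cir_le] := linked_subpartition (linked_eq _ _ eq_w).
have [bul_ge cir_ge] := linked_subpartition (linked_eq _ _ (fun j => esym (eq_w j))).
move: (subpartition_anti bul_ge bul_le) (subpartition_anti cir_ge cir_le).
by case: l mu {eq_w bul_le cir_le bul_ge cir_ge} => [b c] [b' c'] /= -> ->.
Qed.

End Weights.

Section RemoveBox.
Implicit Types a : Defs.partition.

Lemma nth_filter_gt0 (s : seq nat) k : sorted geq s ->
  nth 0%N [seq x <- s | (0 < x)%N] k = nth 0%N s k.
Proof.
elim: s k => [|x s IH] k //= sorted_xs.
have geq_trans : transitive geq by move=> ? ? ? /=; lia.
have /allP x_ge := order_path_min geq_trans sorted_xs.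
case: (posnP x) => [x0|x_gt0]; last by case: k => //= k; rewrite IH // (path_sorted sorted_xs).
have s0 y : y \in s -> y = 0%N by move=> /x_ge /=; lia.
have ->: [seq y <- s | (0 < y)%N] = [::].
  by apply/eqP; rewrite -[_ == _]negbK -has_filter; apply/hasP => -[y /s0 ->].
rewrite nth_nil x0; case: k => //= k.
by case: (ltnP k (size s)) => [/(mem_nth 0%N)/s0 -> | ?]; rewrite ?nth_default.
Qed.

Lemma remove_box a i : (1 <= i)%N -> (part a i.+1 < part a i)%N ->
  exists b : Defs.partition, forall j, (1 <= j)%N -> part b j = (part a j - (j == i))%N.
Proof.
case: i => // i _ corner; have /andP[sorted_a _] := pseqP a.
have lt_i : (i < size (pseq a))%N.
  rewrite ltnNge; apply/negP => ge_i.
  by move: corner; rewrite [part a i.+1]part_eq0 ?ltnS.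
move: corner lt_i sorted_a; rewrite /part /=; set s := pseq a => corner lt_i sorted_s.
set t := set_nth 0%N s i (nth 0%N s i).-1.
have size_t : size t = size s by rewrite size_set_nth; apply/maxn_idPr.
have sorted_t : sorted geq t.
  apply/(sortedP 0%N) => k; rewrite size_t => lt_k.
  have := (sortedP 0%N sorted_s) k lt_k; rewrite /t !nth_set_nth /=.
  case: (eqVneq k i) => [->|_]; first by rewrite eqn_leq ltnn /=; lia.
  by case: (eqVneq k.+1 i) => [<-|]; lia.
have t_part : is_partition [seq x <- t | (0 < x)%N].
  by rewrite /is_partition filter_all sorted_filter //; move=> ? ? ? /=; lia.
exists (Partition t_part) => -[//|j] _.
rewrite /part /= nth_filter_gt0 // /t nth_set_nth /= eqSS.
by case: (eqVneq j i) => [->|]; lia.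
Qed.

Lemma part_corner a i : (1 <= i)%N -> (0 < part a i)%N ->
  exists2 t, (i <= t)%N & part a t = part a i /\ (part a t.+1 < part a t)%N.
Proof.
move=> i_gt0 a_i_gt0; have [|t /andP[le_it drop_t] t_min] := ex_minnP (P := fun t =>
    (i <= t)%N && (part a t.+1 < part a i)%N) _.
  by exists (i + size (pseq a))%N; rewrite leq_addr [part a _]part_eq0 //; lia.
suff a_t : part a t = part a i by exists t; rewrite ?a_t.
case: (eqVneq t i) => [-> //|ne_ti].
have [t' Et] : exists t', t = t'.+1 by exists t.-1; rewrite prednK // (leq_trans i_gt0 le_it).
by move: t_min; rewrite Et => /(_ t'); have := leq_part a i_gt0 le_it; rewrite Et; lia.
Qed.

End RemoveBox.

Lemma ex_first_reach (f : nat -> int) r w : (f r < w)%R ->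
  (exists j, (r < j)%N && (w <= f j)%R) ->
  exists j, [/\ (r < j)%N, (f (j - 1)%N < w)%R & (w <= f j)%R].
Proof.
move=> f_r reach; have [j /andP[lt_rj reach_j] j_min] := ex_minnP reach.
exists j; split => //; case: (eqVneq (j - 1) r) => [-> //|ne_j].
rewrite ltNge; apply/negP => reach_j1.
by have := j_min (j - 1)%N; rewrite reach_j1 andbT; lia.
Qed.

Lemma vee_pos_crossing e a r w : (vee_pos e a r < w)%R ->
  (forall j, (1 <= j)%N -> vee_pos e a j != w) ->
  exists j, [/\ (r < j)%N, (vee_pos e a (j - 1)%N < w)%R & (w < vee_pos e a j)%R].
Proof.
move=> below_r not_w.
have reach : exists j, (r < j)%N && (w <= vee_pos e a j)%R.
  exists (r + absz w + absz e + part a 1).+1; rewrite /vee_pos.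
  by have := leq_part a (j := (r + absz w + absz e + part a 1).+1) (leqnn 1); lia.
have [j [lt_rj below_j above_j]] := ex_first_reach below_r reach.
by exists j; split; rewrite // lt_def above_j andbT not_w //; lia.
Qed.

Lemma wedge_pos_crossing a s u : (1 <= s)%N -> (u < wedge_pos a s)%R ->
  (forall j, (1 <= j)%N -> wedge_pos a j != u) ->
  exists j, [/\ (s < j)%N, (u < wedge_pos a (j - 1)%N)%R & (wedge_pos a j < u)%R].
Proof.
move=> s_gt0 above_s not_u.
have below_s : ((fun j => - wedge_pos a j) s < 1 - u)%R by rewrite /=; lia.
have reach : exists j, (s < j)%N && (1 - u <= (fun j => - wedge_pos a j) j)%R.
  exists (s + part a 1 + absz u).+2; rewrite /wedge_pos.
  by have := leq_part a (j := (s + part a 1 + absz u).+2) (leqnn 1); lia.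
have [j [lt_sj below_j above_j]] := ex_first_reach below_s reach.
exists j; split; rewrite //= ?lt_def ?not_u /=; lia.
Qed.

(* The wedges of the rows [s < x < j0] lie strictly between [u] and [w], so they
   are vees, necessarily of rows [r < y < j1]. *)
Lemma gap_rows e l r s j0 j1 : (1 <= r)%N -> (1 <= s)%N -> (r < j1)%N ->
  (vee_pos e (cir l) r < wedge_pos (bul l) (j0 - 1)%N)%R ->
  (wedge_pos (bul l) s < vee_pos e (cir l) j1)%R ->
  (forall v, (vee_pos e (cir l) r < v)%R -> (v < wedge_pos (bul l) s)%R ->
     in_wedge l v -> in_vee_int e l v) ->
  (j0 - s <= j1 - r)%N.
Proof.
move=> r_gt0 s_gt0 lt_rj1 above_j0 above_j1 gap.
have wedge_decr := wedge_pos_decreasing (bul l).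
set wedges := [seq wedge_pos (bul l) x | x <- iota s.+1 (j0 - 1 - s)].
have uniq_wedges : uniq wedges.
  rewrite map_inj_in_uniq ?iota_uniq // => x y; rewrite !mem_iota => x_in y_in.
  by apply: (strictly_decreasing_inj wedge_decr); lia.
suff /(uniq_leq_size uniq_wedges) :
    {subset wedges <= [seq vee_pos e (cir l) y | y <- iota r.+1 (j1 - 1 - r)]}.
  by rewrite !size_map !size_iota; lia.
move=> v /mapP[x]; rewrite mem_iota => x_in ->.
have below_w : (wedge_pos (bul l) x < wedge_pos (bul l) s)%R by apply: wedge_decr; lia.
have above_u : (vee_pos e (cir l) r < wedge_pos (bul l) x)%R.
  by apply: (lt_le_trans above_j0); apply: (strictly_decreasing_le wedge_decr); lia.
have x_wedge : in_wedge l (wedge_pos (bul l) x) by exists x; split; first lia.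
have [y [y_gt0 Ey]] := gap _ above_u below_w x_wedge.
rewrite Ey; apply: map_f; rewrite mem_iota; apply/andP; split.
  by rewrite ltnNge; apply/negP => le_yr; have := vee_pos_le e (cir l) y_gt0 le_yr; lia.
rewrite ltnNge; apply/negP => le_j1y.
by have := vee_pos_le e (cir l) (i := j1) (j := y); lia.
Qed.

Section Cross.
Variables m n : nat.

Definition noncross_below (l : bipartition) : Prop :=
  exists2 nu, strictly_contained nu l & ~ cross m n nu.

Lemma almost_cross_noncross_below l : almost_cross m n l -> ~ noncross_below l.
Proof. by move=> [_ all_cross] [nu /all_cross]. Qed.

Definition bswap (l : bipartition) : bipartition := Bipartition (cir l) (bul l).

Lemma cross_bswap l : cross m n (bswap l) -> cross m n l.
Proof. by move=> [k [le_km /= cross_k]]; exists (m - k)%N; rewrite subKn //; split; lia. Qed.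

Lemma noncross_below_bswap l : noncross_below (bswap l) -> noncross_below l.
Proof.
move=> [[b c] [sub_nu ne_nu] noncross_nu]; exists (Bipartition c b).
  split=> [i /sub_nu /= []|eq_nu] //; apply: ne_nu; by rewrite -eq_nu.
by move=> cross_cb; apply: noncross_nu; apply: (cross_bswap (l := Bipartition b c)).
Qed.

Lemma noncross_below_bul l t : ~ cross m n l -> (1 <= t)%N ->
  (part (bul l) t.+1 < part (bul l) t)%N ->
  ((t <= m.+1)%N -> (n.+1 < part (bul l) t + part (cir l) (m.+2 - t))%N) ->
  noncross_below l.
Proof.
move=> noncross_l t_gt0 corner big_t; have [b b_part] := remove_box t_gt0 corner.
exists (Bipartition b (cir l)).
  split=> [i i_gt0 /=|eq_l]; first by rewrite b_part //; lia.
  by have := b_part t t_gt0; rewrite -[b]/(bul (Bipartition b (cir l))) eq_l eqxx; lia.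
move=> [k [le_km]] /=; rewrite b_part //; case: (eqVneq k.+1 t) => [Et|ne_kt].
  by move: big_t; rewrite -Et subSS subSn //; lia.
by rewrite subn0 => cross_k; apply: noncross_l; exists k.
Qed.

Lemma noncross_below_cir l t : ~ cross m n l -> (1 <= t)%N ->
  (part (cir l) t.+1 < part (cir l) t)%N ->
  ((t <= m.+1)%N -> (n.+1 < part (bul l) (m.+2 - t) + part (cir l) t)%N) ->
  noncross_below l.
Proof.
move=> noncross_l t_gt0 corner big_t; apply: noncross_below_bswap.
apply: (noncross_below_bul (t := t)) => //= [cross_l|]; first exact/noncross_l/cross_bswap.
by move=> /big_t; rewrite addnC.
Qed.

(* The wedge row [s] and the vee row [r] satisfy [r + s >= m + 3], and the rows just
   above them are strictly longer; removing a corner box keeps [l] non-cross. *)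
Lemma noncross_below_adjacent l p : ~ cross m n l ->
  pure_wedge (m%:Z - n%:Z) l p -> pure_vee (m%:Z - n%:Z) l (p + 1) -> noncross_below l.
Proof.
move=> noncross_l [[s [s_gt0 Ep]] p_not_vee] [[r [r_gt0 Ep1]] p1_not_wedge].
rewrite /wedge_pos in Ep; rewrite /vee_pos in Ep1.
have rs_large : (m + 3 <= r + s)%N.
  rewrite leqNgt; apply/negP => rs_small; apply: noncross_l; exists (s - 1)%N.
  have le_r : (r <= (m - (s - 1)).+1)%N by lia.
  have := leq_part (cir l) r_gt0 le_r; have -> : (s - 1).+1 = s by lia.
  by split; lia.
have bul_drop : (1 < s)%N -> (part (bul l) s < part (bul l) (s - 1))%N.
  move=> s_gt1; have s1_gt0 : (1 <= s - 1)%N by lia.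
  move: (leq_part (bul l) s1_gt0 (leq_subr 1 s)); rewrite leq_eqVlt => /orP[/eqP eq_b|//].
  by case: p1_not_wedge; exists (s - 1)%N; rewrite /wedge_pos -eq_b; split; lia.
have cir_drop : (1 < r)%N -> (part (cir l) r < part (cir l) (r - 1))%N.
  move=> r_gt1; have r1_gt0 : (1 <= r - 1)%N by lia.
  move: (leq_part (cir l) r1_gt0 (leq_subr 1 r)); rewrite leq_eqVlt => /orP[/eqP eq_c|//].
  by case: p_not_vee; exists (r - 1)%N; rewrite /vee_pos -eq_c; split; lia.
case: (posnP (part (bul l) s)) => [b_s0|b_s_gt0].
  have [|t le_rt [c_t corner]] := part_corner (a := cir l) r_gt0; first lia.
  apply: (noncross_below_cir (t := t)) => // [|le_tm]; first lia.
  have [lo_gt0 lo_le] : (1 <= m.+2 - t)%N /\ (m.+2 - t <= s - 1)%N by lia.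
  by have := leq_part (bul l) lo_gt0 lo_le; have := bul_drop; lia.
have [t le_st [b_t corner]] := part_corner s_gt0 b_s_gt0.
apply: (noncross_below_bul (t := t)) => // [|le_tm]; first lia.
have [lo_gt0 lo_le] : (1 <= m.+2 - t)%N /\ (m.+2 - t <= r - 1)%N by lia.
by have := leq_part (cir l) lo_gt0 lo_le; have := cir_drop; lia.
Qed.

(* Remove the last box of the vee row [j1 - 1] just left of [w]: [gap_rows] and the
   non-crossness of [l] at [k = j0 - 1] give [j1 + s >= m + 3], enough to keep the
   result non-cross. *)
Lemma noncross_below_gap l u w : ~ cross m n l ->
  pure_vee (m%:Z - n%:Z) l u -> pure_wedge (m%:Z - n%:Z) l w -> (u < w)%R ->
  (forall v, (u < v)%R -> (v < w)%R -> in_wedge l v -> in_vee_int (m%:Z - n%:Z) l v) ->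
  noncross_below l.
Proof.
set e := (m%:Z - n%:Z)%R.
move=> noncross_l [[r [r_gt0 Eu]] u_not_wedge] [[s [s_gt0 Ew]] w_not_vee] lt_uw gap.
have not_vee_w j : (1 <= j)%N -> vee_pos e (cir l) j != w.
  by move=> j_gt0; apply/eqP => Ej; apply: w_not_vee; exists j.
have not_wedge_u j : (1 <= j)%N -> wedge_pos (bul l) j != u.
  by move=> j_gt0; apply/eqP => Ej; apply: u_not_wedge; exists j; rewrite -Ej.
subst u w.
have [j1 [lt_rj1 below_j1 above_j1]] := vee_pos_crossing lt_uw not_vee_w.
have [j0 [lt_sj0 above_j0 below_j0]] := wedge_pos_crossing s_gt0 lt_uw not_wedge_u.
have count := gap_rows r_gt0 s_gt0 lt_rj1 above_j0 above_j1 gap.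
have long : (m + 3 <= j1 + s)%N.
  suff : (m + 3 <= r + j0)%N by lia.
  rewrite leqNgt; apply/negP => short; apply: noncross_l; exists (j0 - 1)%N.
  have -> : (j0 - 1).+1 = j0 by lia.
  have := leq_part (cir l) (j := (m - (j0 - 1)).+1) r_gt0.
  by move: below_j0; rewrite /wedge_pos /vee_pos /e; split; lia.
have [t_gt0 Et] : (1 <= j1 - 1)%N /\ (j1 - 1).+1 = j1 by lia.
apply: (noncross_below_cir (t := j1 - 1)) => //.
  by move: below_j1 above_j1; rewrite Et /vee_pos; lia.
move=> le_tm; have [lo_gt0 lo_le] : (1 <= m.+2 - (j1 - 1))%N /\ (m.+2 - (j1 - 1) <= s)%N by lia.
by have := leq_part (bul l) lo_gt0 lo_le; move: below_j1; rewrite /vee_pos /e; lia.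
Qed.

(* Induct on the distance, passing to a pure wedge strictly in between while there
   is one; otherwise every wedge in the gap is a cross. *)
Lemma noncross_below_vee_wedge l u w : ~ cross m n l ->
  pure_vee (m%:Z - n%:Z) l u -> pure_wedge (m%:Z - n%:Z) l w -> (u < w)%R ->
  noncross_below l.
Proof.
move=> noncross_l vee_u; move: (leqnn (absz (w - u))); move: {2}(absz (w - u)) => N.
elim: N w => [|N IH] w dist wedge_w lt_uw; first lia.
case: (classic (exists v, (u < v < w)%R /\ pure_wedge (m%:Z - n%:Z) l v)).
  by move=> [v [/andP[lt_uv lt_vw] wedge_v]]; apply: (IH v) => //; lia.
move=> no_pure; apply: (noncross_below_gap noncross_l vee_u wedge_w lt_uw).
move=> v lt_uv lt_vw wedge_v; apply: NNPP => not_vee; apply: no_pure.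
by exists v; rewrite lt_uv lt_vw.
Qed.
End Cross.

Lemma subpartition_bsize_gt e (l mu : bipartition) p q :
  subpartition (bul mu) (bul l) -> subpartition (cir mu) (cir l) ->
  in_wedge mu p -> ~ in_wedge l p -> in_wedge l q -> ~ in_wedge mu q ->
  in_vee_int e mu q -> ~ in_vee_int e l q -> q != (p + 1)%R ->
  (bsize mu + 2 < bsize l)%N.
Proof.
move=> sub_bul sub_cir [k [k_gt0 Ep]] not_wedge_p [k' [k'_gt0 Eq']] not_wedge_q.
move=> [j [j_gt0 Eq]] not_vee_q ne_q.
have lt_k : (part (bul mu) k < part (bul l) k)%N.
  rewrite ltn_neqAle sub_bul // andbT; apply/eqP => eq_k.
  by apply: not_wedge_p; exists k; rewrite Ep eq_k.
have lt_k' : (part (bul mu) k' < part (bul l) k')%N.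
  rewrite ltn_neqAle sub_bul // andbT; apply/eqP => eq_k'.
  by apply: not_wedge_q; exists k'; rewrite Eq' eq_k'.
have lt_j : (part (cir mu) j < part (cir l) j)%N.
  rewrite ltn_neqAle sub_cir // andbT; apply/eqP => eq_j.
  by apply: not_vee_q; exists j; rewrite Eq /vee_pos eq_j.
have := psize_subpartition (r := [:: j]) sub_cir isT; rewrite big_seq1 /= j_gt0 => grow_cir.
rewrite /bsize; case: (eqVneq k k') => [eq_k|ne_k].
  subst k'; have := psize_subpartition (r := [:: k]) sub_bul isT.
  rewrite big_seq1 /= k_gt0 => grow_bul.
  suff : (2 <= part (bul l) k - part (bul mu) k)%N by lia.
  by move: ne_q; rewrite Eq' Ep /wedge_pos => /eqP ne_q; lia.
have uniq_kk' : uniq [:: k; k'] by rewrite /= inE ne_k.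
have := psize_subpartition (r := [:: k; k']) sub_bul uniq_kk'.
by rewrite !big_cons big_nil /= k_gt0 k'_gt0 => /(_ isT); lia.
Qed.

Section Linkage.
Variables (K : fieldType) (charK0 : [pchar K]%R =i pred0) (m n : nat).
Local Notation e := (m%:Z - n%:Z)%R.
Local Notation d := (e%:~R%R : K).

Lemma almost_cross_no_cap l a b : almost_cross m n l -> ~ cap (weight d l) a b.
Proof.
move=> almost_l /cap_vee_wedge[lt_ab /(weight_Vee charK0) vee_a /(weight_Wedge charK0) wedge_b].
exact: (almost_cross_noncross_below almost_l
  (noncross_below_vee_wedge (proj1 almost_l) vee_a wedge_b lt_ab)).
Qed.

Lemma almost_cross_not_linked l mu : almost_cross m n l -> mu <> l ->
  ~ linked (weight d l) (weight d mu).
Proof.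
move=> almost_l ne_mu [[|p s] [caps_s eq_y]].
  by apply: ne_mu; apply/esym/(weight_inj charK0) => j; exact/esym/eq_y.
by apply: (almost_cross_no_cap almost_l (caps_s p _)); rewrite inE eqxx.
Qed.

Lemma linked_almost_cross l mu : almost_cross m n mu ->
  linked (weight d l) (weight d mu) -> l = mu \/ (bsize mu + 2 < bsize l)%N.
Proof.
move=> almost_mu linked_lmu; have [sub_bul sub_cir] := linked_subpartition charK0 linked_lmu.
move: linked_lmu => [s [caps_s eq_y]].
have [[v moved_v]|fixed] := classic (exists v, swap_pairs s v != v); last first.
  left; apply: (weight_inj charK0 (e := e)) => j; rewrite eq_y.
  by case: (eqVneq (swap_pairs s j) j) => [->|moved_j] //; case: fixed; exists j.
right; have [p [q [cap_pq sg_p sg_q]]] := swap_pairs_transposition caps_s moved_v.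
have [_ x_p x_q] := cap_vee_wedge cap_pq.
have /(weight_Wedge charK0) wedge_p_mu : weight d mu p = Wedge by rewrite eq_y sg_p.
have /(weight_Vee charK0) vee_q_mu : weight d mu q = Vee by rewrite eq_y sg_q.
move: x_p x_q => /(weight_Vee charK0)[_ not_wedge_p] /(weight_Wedge charK0)[wedge_q not_vee_q].
case: (eqVneq q (p + 1)%R) => [Eq|ne_q].
  case: (almost_cross_noncross_below almost_mu).
  by apply: (noncross_below_adjacent (proj1 almost_mu) wedge_p_mu); rewrite -Eq.
exact: (subpartition_bsize_gt sub_bul sub_cir (proj1 wedge_p_mu) not_wedge_p wedge_q
  (proj2 vee_q_mu) (proj1 vee_q_mu) not_vee_q ne_q).
Qed.
End Linkage.

Theorem corollary2p8 (K : fieldType) (charK0 : [pchar K]%R =i pred0)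
    (m n : nat) (lam mu : bipartition) :
  let d : K := ((m%:Z - n%:Z)%R)%:~R%R in
  (almost_cross m n lam -> mu <> lam -> D d lam mu = 0) /\
  (almost_cross m n mu -> D d lam mu = 0 \/ lam = mu \/ bsize lam > bsize mu + 2).
Proof.
move=> d; rewrite /D; case: excluded_middle_informative => [linked_lmu|?]; last by split=> //; left.
split=> [almost_lam ne_mu|almost_mu].
  by case: (almost_cross_not_linked charK0 almost_lam ne_mu linked_lmu).
by right; apply: (linked_almost_cross charK0 almost_mu linked_lmu).
Qed.
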